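(* Let $\mathcal S=(\mathcal P,\mathcal L)$ be a linear space with $v$ points and constant line size $k$, $2<k<v$; let $G\le\mathrm{Aut}(\mathcal S)$ be transitive on lines, and let $\mathfrak C$ be a non-trivial $G$-invariant partition of $\mathcal P$ with $d$ classes of size $c$; let $C\in\mathfrak C$ and let $G^C$ be the permutation group induced on $C$ by its setwise stabiliser $G_C$. (i) If $G^C$ is $3$-homogeneous, then $\mathrm{spec}\,\mathcal S=\{1,2\}$. (ii) If $G^C$ is $2$-homogeneous, then $\mathrm{spec}\,\mathcal S=\{1,h\}$ for some $h\ge2$.
   Context: A linear space: a finite set $\mathcal P$ of points and a set $\mathcal L$ of subsets (lines) such that any two distinct points lie on exactly one line and each line has at least two points. For a line $\lambda$ and $i\ge0$, $d_i$ is the number of classes $C\in\mathfrak C$ with $|C\cap\lambda|=i$ (independent of $\lambda$); $\mathrm{spec}\,\mathcal S=\{i>0:d_i\ne0\}$. A permutation group is $t$-homogeneous if it is transitive on $t$-element subsets. *)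

From mathcomp Require Import all_boot all_fingroup.
Set Implicit Arguments. Unset Strict Implicit. Unset Printing Implicit Defensive.

Definition linear_space (P : finType) (L : {set {set P}}) : Prop :=
  (forall l, l \in L -> 2 <= #|l|) /\
  (forall x y : P, x != y -> exists! l, l \in L /\ x \in l /\ y \in l).

Definition is_aut (P : finType) (L : {set {set P}}) (g : {perm P}) : Prop :=
  forall l, l \in L -> g @: l \in L.

Definition line_transitive (P : finType) (L : {set {set P}})
  (G : {group {perm P}}) : Prop :=
  forall l1 l2, l1 \in L -> l2 \in L -> exists2 g, g \in G & g @: l1 = l2.

Definition G_invariant_partition (P : finType) (G : {group {perm P}})
  (Cl : {set {set P}}) : Prop :=
  partition Cl [set: P] /\ forall g C, g \in G -> C \in Cl -> g @: C \in Cl.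

Definition induced_homogeneous (P : finType) (G : {group {perm P}})
  (C : {set P}) (t : nat) : Prop :=
  forall A B : {set P}, A \subset C -> B \subset C -> #|A| = t -> #|B| = t ->
    exists2 g, g \in G & g @: C = C /\ g @: A = B.

Definition d_i (P : finType) (Cl : {set {set P}}) (lam : {set P}) (i : nat) : nat :=
  #|[set C in Cl | #|C :&: lam| == i]|.

Definition in_spec (P : finType) (Cl : {set {set P}}) (lam : {set P}) (i : nat) : bool :=
  (0 < i) && (d_i Cl lam i != 0).

From mathcomp Require Import all_boot all_fingroup zify.
Set Implicit Arguments. Unset Strict Implicit. Unset Printing Implicit Defensive.

(* Every point lies on r >= k lines, where r (k - 1) = v - 1.  A G-orbit meets
   every line in the same number of points, and counting its points on the
   lines through a point inside and a point outside it would force r = 1; hence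
   G is point-transitive and thus transitive on the classes, and the
   intersection numbers |D :&: lam| of the classes with a line do not depend on
   the line.  If every line meeting C in at least two points meets it in
   exactly h points, the spectrum is {1, h}: h occurs on a line through two
   points of C, and 1 occurs, since otherwise all lines through some x in C
   would meet C in h points, so that r (h - 1) = c - 1 and r (k - h) = v - c;
   as gcd (c, r) = 1 this gives c | k - h, against c > r >= k.
   Two-homogeneity of G^C makes all lines meeting C in two points equivalent
   under G_C.  Three-homogeneity makes a line meeting C in three points contain
   C; then every line contains a class, so b <= d < v, against Fisher's
   inequality b >= v. *)

Lemma incidence_double_count (T : finType) (A : {set {set T}}) (S : {set T}) :
  \sum_(l in A) #|l :&: S| = \sum_(y in S) #|[set l in A | y \in l]|.
Proof.
transitivity (\sum_(l in A) \sum_(y in S) (y \in l : nat)).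
  apply: eq_bigr => l _; rewrite -sum1_card big_mkcond [RHS]big_mkcond /=.
  by apply: eq_bigr => y _; rewrite !inE; case: (y \in l); case: (y \in S).
rewrite exchange_big; apply: eq_bigr => y _.
rewrite -sum1_card big_mkcond [RHS]big_mkcond /=.
by apply: eq_bigr => l _; rewrite !inE; case: (y \in l); case: (l \in A).
Qed.

Lemma card_setD1 (T : finType) (A : {set T}) x : #|A :\ x| = #|A| - (x \in A).
Proof. by rewrite [#|A|](cardsD1 x) addKn. Qed.

Lemma cards3 (T : finType) (x y z : T) :
  x != y -> x != z -> y != z -> #|[set x; y; z]| = 3.
Proof. by move=> xy xz yz; rewrite -setUA cardsU1 cards2 yz !inE negb_or xy xz. Qed.

Lemma card_imsetI_perm (T : finType) (g : {perm T}) (A B : {set T}) :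
  #|g @: A :&: g @: B| = #|A :&: B|.
Proof.
rewrite -imsetI ?card_imset //; first exact: perm_inj.
by move=> a b _ _; apply: perm_inj.
Qed.

Lemma imset_permKV (T : finType) (g : {perm T}) (A : {set T}) :
  g @: ((g^-1)%g @: A) = A.
Proof. by rewrite -imset_comp (eq_imset _ (permKV g)) imset_id. Qed.

Lemma in_specP (T : finType) (Cl : {set {set T}}) (lam : {set T}) i :
  reflect (0 < i /\ exists2 D, D \in Cl & #|D :&: lam| = i) (in_spec Cl lam i).
Proof.
rewrite /in_spec /d_i cards_eq0; apply: (iffP andP) => -[i_gt0 D_ex]; split=> //.
  by case/set0Pn: D_ex => D; rewrite inE => /andP[DCl /eqP]; exists D.
by case: D_ex => D DCl DI; apply/set0Pn; exists D; rewrite inE DCl DI eqxx.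
Qed.

Section LinearSpace.
Variables (P : finType) (L : {set {set P}}).
Hypothesis LS : linear_space L.

Lemma line_eq l1 l2 x y : l1 \in L -> l2 \in L -> x != y ->
  x \in l1 -> y \in l1 -> x \in l2 -> y \in l2 -> l1 = l2.
Proof.
move=> l1L l2L xy xl1 yl1 xl2 yl2; have [l [_ l_uniq]] := LS.2 x y xy.
by rewrite -(l_uniq l1) ?(l_uniq l2).
Qed.

Lemma card_setI_lines_le1 l1 l2 : l1 \in L -> l2 \in L -> l1 != l2 ->
  #|l1 :&: l2| <= 1.
Proof.
move=> l1L l2L; apply: contraNT; rewrite -ltnNge => /card_gt1P[x [y []]].
rewrite !inE => /andP[xl1 xl2] /andP[yl1 yl2] xy.
by apply/eqP; apply: line_eq l1L l2L xy xl1 yl1 xl2 yl2.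
Qed.

Definition lines_through x := [set l in L | x \in l].

Lemma card_lines_through2 x y : x != y ->
  #|[set l in lines_through x | y \in l]| = 1.
Proof.
move=> xy; have [l [[lL [xl yl]] _]] := LS.2 x y xy.
apply/eqP/cards1P; exists l; apply/setP => m; rewrite !inE.
apply/idP/eqP => [/andP[/andP[mL xm] ym] | ->]; last by rewrite lL xl yl.
exact: line_eq mL lL xy xm ym xl yl.
Qed.

Lemma sum_card_lines_through x S :
  \sum_(l in lines_through x) #|l :&: (S :\ x)| = #|S :\ x|.
Proof.
rewrite incidence_double_count -sum1_card; apply: eq_bigr => y.
by rewrite !inE => /andP[yx _]; rewrite card_lines_through2 // eq_sym.
Qed.

Lemma card_lines_through_mul x S m :
  (forall l, l \in lines_through x -> #|l :&: S| = m) ->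
  #|lines_through x| * (m - (x \in S)) = #|S| - (x \in S).
Proof.
move=> lS; rewrite -card_setD1 -(sum_card_lines_through x S) -sum_nat_const.
apply: eq_bigr => l lx; move: (lx); rewrite inE => /andP[_ xl].
by rewrite setIDA card_setD1 lS // inE xl.
Qed.

Lemma card_line_le_lines_through l x : l \in L -> x \notin l ->
  #|l| <= #|lines_through x|.
Proof.
move=> lL xl; have -> : #|l| = #|l :\ x| by rewrite card_setD1 (negbTE xl) subn0.
rewrite -sum_card_lines_through -sum1_card; apply: leq_sum => m.
rewrite inE => /andP[mL xm]; have ml : m != l by apply: contraNneq xl => <-.
apply: leq_trans (card_setI_lines_le1 mL lL ml).
exact/subset_leq_card/setIS/subD1set.
Qed.

End LinearSpace.

Section ConstantLineSize.
Variables (P : finType) (L : {set {set P}}) (k : nat).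
Hypotheses (LS : linear_space L) (Lk : forall l, l \in L -> #|l| = k).
Hypotheses (k_gt1 : 1 < k) (k_lt_v : k < #|P|).

Lemma card_lines_through_k x : #|lines_through L x| * (k - 1) = #|P| - 1.
Proof.
have := card_lines_through_mul LS (S := [set: P]) (m := k) (x := x).
rewrite in_setT cardsT; apply=> l.
by rewrite inE => /andP[lL _]; rewrite setIT Lk.
Qed.

Lemma card_lines_through_const x y : #|lines_through L x| = #|lines_through L y|.
Proof.
have k1_gt0 : 0 < k - 1 by rewrite subn_gt0.
by apply/eqP; rewrite -(eqn_pmul2r k1_gt0) !card_lines_through_k.
Qed.

Lemma exists_line_avoiding x : exists2 l, l \in L & x \notin l.
Proof.
have [a [b [_ _ ab]]] : exists a b, [/\ a \in [set: P], b \in [set: P] & a != b].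
  by apply/card_gt1P; rewrite cardsT (ltn_trans k_gt1 k_lt_v).
have [l0 [[l0L _] _]] := LS.2 a b ab.
have [xl0|] := boolP (x \in l0); last by exists l0.
have /card_gt0P[z] : 0 < #|~: l0| by have := cardsC l0; rewrite Lk //; lia.
rewrite inE => zl0.
have /card_gt0P[w] : 0 < #|l0 :\ x| by rewrite card_setD1 xl0 Lk //; lia.
rewrite !inE => /andP[wx wl0].
have zw : z != w by apply: contraNneq zl0 => ->.
have [l [[lL [zl wl]] _]] := LS.2 z w zw.
exists l => //; apply: contraNN zl0 => xl.
by rewrite -(line_eq LS lL l0L wx wl xl wl0 xl0).
Qed.

Lemma line_size_le_card_lines_through x : k <= #|lines_through L x|.
Proof.
have [l lL xl] := exists_line_avoiding x.
by rewrite -(Lk lL); apply: card_line_le_lines_through.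
Qed.

Lemma card_points_le_lines : #|P| <= #|L|.
Proof.
rewrite -(@leq_pmul2r k) ?(ltnW k_gt1) // -cardsT -!sum_nat_const.
rewrite (eq_bigr (fun l => #|l :&: [set: P]|)) => [|l lL]; last by rewrite setIT Lk.
rewrite incidence_double_count; apply: leq_sum => y _.
exact: line_size_le_card_lines_through.
Qed.

Lemma card_setI_lines_through_nonconst (S : {set P}) x h :
  x \in S -> #|S| %| #|P| -> #|S| < #|P| -> 1 < h ->
  ~ (forall l, l \in lines_through L x -> #|l :&: S| = h).
Proof.
move=> xS s_dvd_v s_lt_v h_gt1 lSh.
set r := #|lines_through L x|; set s := #|S|.
have r_ge_k : k <= r := line_size_le_card_lines_through x.
have s_gt0 : 0 < s by apply/card_gt0P; exists x.
have rS : r * (h - 1) = s - 1 by have := card_lines_through_mul LS lSh; rewrite xS.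
have rSC : r * (k - h) = #|P| - s.
  have := card_lines_through_mul LS (S := ~: S) (m := k - h) (x := x).
  rewrite inE xS -(cardsC S) addKn !subn0; apply=> l lx; move: (lx).
  by rewrite inE => /andP[lL _]; rewrite -setDE -(Lk lL) -(cardsID S l) lSh // addKn.
have s_coprime_r : coprime s r.
  have -> : s = (h - 1) * r + 1 by rewrite mulnC rS subnK.
  by rewrite -coprime_modl modnMDl coprime_modl coprime1n.
have s_dvd_kh : s %| k - h by rewrite -(Gauss_dvdr _ s_coprime_r) rSC dvdn_sub.
have kh_gt0 : 0 < k - h.
  by rewrite lt0n; apply: contraTneq s_lt_v => kh0; move: rSC; rewrite kh0; lia.
have r_lt_s : r < s by rewrite -(subnK s_gt0) addn1 ltnS -rS leq_pmulr // subn_gt0.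
by have := dvdn_leq kh_gt0 s_dvd_kh; lia.
Qed.

End ConstantLineSize.

Section LineTransitiveGroup.
Variables (P : finType) (L : {set {set P}}) (k : nat) (G : {group {perm P}}).
Hypotheses (LS : linear_space L) (Lk : forall l, l \in L -> #|l| = k).
Hypotheses (k_gt1 : 1 < k) (k_lt_v : k < #|P|).
Hypotheses (autG : forall g, g \in G -> is_aut L g) (LT : line_transitive L G).

Lemma card_setI_line_invariant (S : {set P}) l m :
  {in G, forall g : {perm P}, g @: S = S} -> l \in L -> m \in L ->
  #|l :&: S| = #|m :&: S|.
Proof.
move=> GS lL mL; have [g gG <-] := LT lL mL.
by rewrite -{2}(GS g gG) card_imsetI_perm.
Qed.

Lemma point_transitive x y : exists2 g, g \in G & g x = y.
Proof.
pose O := orbit 'P G x.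
have [/orbitP[g gG <-]|yO] := boolP (y \in O); first by exists g.
exfalso.
have GO : {in G, forall g : {perm P}, g @: O = O}.
  move=> g gG; have GnO := subsetP (acts_orbit 'P x (subsetT G)) g gG.
  by rewrite -[RHS](astabs_setact GnO) setactE.
have xO : x \in O := orbit_refl 'P G x.
have [l0 l0L _] := exists_line_avoiding LS Lk k_gt1 k_lt_v x.
have lO z l : l \in lines_through L z -> #|l :&: O| = #|l0 :&: O|.
  by rewrite inE => /andP[lL _]; apply: card_setI_line_invariant.
have := card_lines_through_mul LS (lO x); have := card_lines_through_mul LS (lO y).
rewrite xO (negbTE yO) (card_lines_through_const LS Lk k_gt1 x y) !subn0.
have := line_size_le_card_lines_through LS Lk k_gt1 k_lt_v y.
have : 0 < #|O| by apply/card_gt0P; exists x.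
(* the two counts r (m - 1) = |O| - 1 and r m = |O| force r = 1 < k *)
case: #|l0 :&: O| => [|m]; first by rewrite muln0; lia.
rewrite subSS subn0 mulnS; move: (_ * m) => t; lia.
Qed.

Section InvariantPartition.
Variables (Cl : {set {set P}}) (c d : nat).
Hypotheses (GCl : G_invariant_partition G Cl) (Cd : #|Cl| = d).
Hypotheses (Cc : forall D, D \in Cl -> #|D| = c) (c_gt1 : 1 < c) (d_gt1 : 1 < d).

Lemma card_points_partition : #|P| = d * c.
Proof. by rewrite -cardsT (card_uniform_partition Cc GCl.1) Cd. Qed.

Lemma class_transitive C D : C \in Cl -> D \in Cl -> exists2 g, g \in G & g @: C = D.
Proof.
move=> CCl DCl; have [/and3P[_ tI _] GCl_inv] := GCl.
have /card_gt0P[x xC] : 0 < #|C| by rewrite Cc // ltnW.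
have /card_gt0P[y yD] : 0 < #|D| by rewrite Cc // ltnW.
have [g gG gxy] := point_transitive x y; exists g => //.
have ygC : y \in g @: C by rewrite -gxy imset_f.
by rewrite -(def_pblock tI (GCl_inv g C gG CCl) ygC) (def_pblock tI DCl yD).
Qed.

Lemma in_spec_line_invariant l m i : l \in L -> m \in L ->
  in_spec Cl l i = in_spec Cl m i.
Proof.
suff in_spec_mono l1 l2 : l1 \in L -> l2 \in L -> in_spec Cl l1 i -> in_spec Cl l2 i.
  by move=> lL mL; apply/idP/idP; apply: in_spec_mono.
move=> l1L l2L /in_specP[i_gt0 [D DCl Di]]; apply/in_specP; split=> //.
have [g gG <-] := LT l1L l2L; exists (g @: D); first exact: GCl.2.
by rewrite card_imsetI_perm.
Qed.

Lemma exists_line_card_setI_class C D l : C \in Cl -> D \in Cl -> l \in L ->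
  exists2 m, m \in L & #|D :&: l| = #|C :&: m|.
Proof.
move=> CCl DCl lL; have [g gG <-] := class_transitive CCl DCl.
exists ((g^-1)%g @: l); first by apply: autG; rewrite ?groupV.
by rewrite -{1}(imset_permKV g l) card_imsetI_perm.
Qed.

Lemma class_not_sub_line C l : C \in Cl -> l \in L -> ~~ (C \subset l).
Proof.
move=> CCl lL; apply/negP => Cl_sub.
have line_has_class m : m \in L -> exists2 D, D \in Cl & D \subset m.
  move=> mL; have [g gG <-] := LT lL mL.
  by exists (g @: C); [apply: GCl.2 | apply: imsetS].
pose line_of (D : {set P}) := odflt set0 [pick m | (m \in L) && (D \subset m)].
have L_sub : L \subset line_of @: Cl.
  apply/subsetP => m mL; have [D DCl Dm] := line_has_class m mL.
  apply/imsetP; exists D => //; rewrite /line_of.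
  case: pickP => [m' /andP[m'L Dm'] /= | /(_ m)]; last by rewrite mL Dm.
  have /card_gt1P[x [y [xD yD xy]]] : 1 < #|D| by rewrite Cc.
  exact (line_eq LS mL m'L xy (subsetP Dm x xD) (subsetP Dm y yD)
                             (subsetP Dm' x xD) (subsetP Dm' y yD)).
have v_le_d : #|P| <= d.
  rewrite -Cd; apply: leq_trans (card_points_le_lines LS Lk k_gt1 k_lt_v) _.
  exact: leq_trans (subset_leq_card L_sub) (leq_imset_card _ _).
by move: v_le_d; rewrite card_points_partition mulnC leqNgt ltn_Pmull // ltnW.
Qed.

Lemma in_spec_1_h C h : C \in Cl -> 1 < h ->
  (forall l, l \in L -> 1 < #|l :&: C| -> #|l :&: C| = h) ->
  forall lam, lam \in L -> forall i, in_spec Cl lam i = (i == 1) || (i == h).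
Proof.
move=> CCl h_gt1 Ch lam lamL i.
have /card_gt1P[x [y [xC yC xy]]] : 1 < #|C| by rewrite Cc.
have [mu [[muL [xmu ymu]] _]] := LS.2 x y xy.
have spec_h : in_spec Cl lam h.
  rewrite (in_spec_line_invariant _ lamL muL).
  apply/in_specP; split; first exact: ltnW.
  exists C; rewrite // setIC; apply: Ch => //.
  by apply/card_gt1P; exists x, y; rewrite !inE xmu ymu xC yC.
have spec_1 : in_spec Cl lam 1.
  have [//|no1] := boolP (in_spec Cl lam 1); exfalso.
  have C_dvd_v : #|C| %| #|P| by rewrite card_points_partition Cc // dvdn_mull.
  have C_lt_v : #|C| < #|P| by rewrite card_points_partition Cc // ltn_Pmull // ltnW.
  apply: (card_setI_lines_through_nonconst LS Lk k_gt1 k_lt_v xC C_dvd_v C_lt_v).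
  apply: h_gt1.
  move=> l; rewrite inE => /andP[lL xl]; apply: Ch => //.
  have lC_neq1 : 1 != #|l :&: C|.
    apply: contra no1 => /eqP lC1; rewrite (in_spec_line_invariant _ lamL lL).
    by apply/in_specP; split=> //; exists C; rewrite // setIC.
  have lC_gt0 : 0 < #|l :&: C| by apply/card_gt0P; exists x; rewrite inE xl xC.
  by rewrite ltn_neqAle lC_neq1.
have [/eqP -> //|i_neq1] := boolP (i == 1).
have [/eqP -> //|i_neqh] := boolP (i == h).
apply/in_specP => -[i_gt0 [D DCl Dlam]].
have i_gt1 : 1 < i by rewrite ltn_neqAle eq_sym i_neq1.
have [m mL Dm] := exists_line_card_setI_class CCl DCl lamL.
have := Ch m mL; rewrite setIC -Dm Dlam => /(_ i_gt1) i_eq_h.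
by rewrite i_eq_h eqxx in i_neqh.
Qed.

End InvariantPartition.

Lemma class_sub_line_of_3_homogeneous C l : induced_homogeneous G C 3 ->
  l \in L -> 2 < #|l :&: C| -> C \subset l.
Proof.
move=> hom3 lL lC_gt2.
have /card_gt1P[x [y [xlC ylC xy]]] := ltnW lC_gt2.
move: xlC ylC; rewrite !inE => /andP[xl xC] /andP[yl yC].
have /card_gt0P[w] : 0 < #|l :&: C :\ x :\ y|.
  by rewrite !card_setD1 !inE eq_sym xy yl yC xl xC -subnDA subn_gt0.
rewrite !inE => /and4P[wy wx wl wC].
apply/subsetP => z zC.
have [-> //|zx] := eqVneq z x; have [-> //|zy] := eqVneq z y.
have xywC : [set x; y; w] \subset C by rewrite !subUset !sub1set xC yC wC.
have xyzC : [set x; y; z] \subset C by rewrite !subUset !sub1set xC yC zC.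
have card_xyw : #|[set x; y; w]| = 3 by rewrite cards3 // eq_sym.
have card_xyz : #|[set x; y; z]| = 3 by rewrite cards3 // eq_sym.
have [g gG [_ gxyw]] := hom3 _ _ xywC xyzC card_xyw card_xyz.
have xyz_gl : [set x; y; z] \subset g @: l.
  by rewrite -gxyw imsetS // !subUset !sub1set xl yl wl.
have gl : g @: l = l.
  apply: (line_eq LS (autG gG lL) lL xy _ _ xl yl); apply: (subsetP xyz_gl).
    by rewrite !inE eqxx.
  by rewrite !inE eqxx orbT.
by rewrite -gl (subsetP xyz_gl) // !inE eqxx !orbT.
Qed.

Lemma card_setI_class_of_2_homogeneous C l m : induced_homogeneous G C 2 ->
  l \in L -> m \in L -> 1 < #|l :&: C| -> 1 < #|m :&: C| ->
  #|l :&: C| = #|m :&: C|.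
Proof.
move=> hom2 lL mL /card_gt1P[x [y [xlC ylC xy]]] /card_gt1P[u [v [umC vmC uv]]].
move: xlC ylC umC vmC; rewrite !inE.
move=> /andP[xl xC] /andP[yl yC] /andP[um uC] /andP[vm vC].
have xyC : [set x; y] \subset C by rewrite !subUset !sub1set xC yC.
have uvC : [set u; v] \subset C by rewrite !subUset !sub1set uC vC.
have card_xy : #|[set x; y]| = 2 by rewrite cards2 xy.
have card_uv : #|[set u; v]| = 2 by rewrite cards2 uv.
have [g gG [gC gxy]] := hom2 _ _ xyC uvC card_xy card_uv.
have uv_gl : [set u; v] \subset g @: l.
  by rewrite -gxy imsetS // !subUset !sub1set xl yl.
have gl : g @: l = m.
  apply: (line_eq LS (autG gG lL) mL uv _ _ um vm); apply: (subsetP uv_gl).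
    by rewrite !inE eqxx.
  by rewrite !inE eqxx orbT.
by rewrite -gl -{2}gC card_imsetI_perm.
Qed.

End LineTransitiveGroup.

Theorem lemma5p2 (P : finType) (L : {set {set P}}) (k : nat)
  (G : {group {perm P}}) (Cl : {set {set P}}) (c d : nat) (C : {set P}) :
  linear_space L ->
  (forall l, l \in L -> #|l| = k) ->
  2 < k -> k < #|P| ->
  (forall g, g \in G -> is_aut L g) ->
  line_transitive L G ->
  G_invariant_partition G Cl ->
  #|Cl| = d -> (forall D, D \in Cl -> #|D| = c) ->
  1 < c -> 1 < d ->
  C \in Cl ->
  (induced_homogeneous G C 3 ->
     forall lam, lam \in L -> forall i, in_spec Cl lam i = (i == 1) || (i == 2)) /\
  (induced_homogeneous G C 2 ->
     exists2 h, 2 <= h &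
       forall lam, lam \in L -> forall i, in_spec Cl lam i = (i == 1) || (i == h)).
Proof.
move=> LS Lk k_gt2 k_lt_v autG LT GCl Cd Cc c_gt1 d_gt1 CCl.
have k_gt1 := ltnW k_gt2.
have spec_1_h := in_spec_1_h LS Lk k_gt1 k_lt_v autG LT GCl Cd Cc c_gt1 d_gt1 CCl.
split=> [hom3 | hom2].
  apply: spec_1_h => // l lL lC_gt1; apply/eqP; rewrite eqn_leq lC_gt1 andbT leqNgt.
  move: (class_not_sub_line LS Lk k_gt1 k_lt_v LT GCl Cd Cc c_gt1 d_gt1 CCl lL).
  by apply: contraNN; apply: (class_sub_line_of_3_homogeneous LS autG hom3 lL).
have /card_gt1P[x [y [xC yC xy]]] : 1 < #|C| by rewrite Cc.
have [mu [[muL [xmu ymu]] _]] := LS.2 x y xy.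
have muC_gt1 : 1 < #|mu :&: C|.
  by apply/card_gt1P; exists x, y; rewrite !inE xmu ymu xC yC.
exists #|mu :&: C| => //; apply: spec_1_h => // l lL lC_gt1.
exact: (card_setI_class_of_2_homogeneous LS autG hom2 lL muL lC_gt1 muC_gt1).
Qed.
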